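(* Let $p=N=5$, and let $r_R=\operatorname{rank}Q_R$ for the maps $Q_R:\Lambda^R\to\Lambda^{R+5}$ defined below, whose values for $0\le R\le 9$ are \[ (r_0,\dots,r_9)=(1,\,25,\,300,\,2300,\,12650,\,53129,\,177075,\,480400,\,1045525,\,1723450). \] Consider the degree-20 rank polynomial $\mathcal R_{5,5}(x)=\sum_{R=0}^{20}r_Rx^R$, which is palindromic ($r_{20-R}=r_R$). These ten ranks, palindromicity, and the single condition $(1+x)\mid\mathcal R_{5,5}(x)$ determine the middle coefficient $r_{10}$ uniquely (namely $r_{10}=2{,}047{,}506$). For the resulting polynomial, $(1+x)^4\mid\mathcal R_{5,5}(x)$ while $(1+x)^5\nmid\mathcal R_{5,5}(x)$.
   Context: $\Lambda=\Lambda^\bullet(\mathbb{C}^{5\times5})$ is the exterior algebra on the $25$ odd generators $\Psi_{ij}$, $1\le i,j\le5$, and $Q_R$ is left wedge multiplication by $\mathrm{Tr}(\Psi^5)=\sum_{i_1,\dots,i_5}\Psi_{i_1i_2}\Psi_{i_2i_3}\Psi_{i_3i_4}\Psi_{i_4i_5}\Psi_{i_5i_1}$ restricted to $\Lambda^R$. Divisibility is in $\mathbb{Q}[x]$. *)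

From mathcomp Require Import all_boot all_order all_algebra.
Set Implicit Arguments. Unset Strict Implicit. Unset Printing Implicit Defensive.
Import GRing.Theory.
Local Open Scope ring_scope.

Definition r_low : seq nat :=
  [:: 1%N; 25%N; 300%N; 2300%N; 12650%N; 53129%N; 177075%N; 480400%N;
      1045525%N; 1723450%N].

Definition rcoef (c : nat) (i : nat) : nat :=
  if (i < 10)%N then nth 0%N r_low i
  else if i == 10%N then c
  else nth 0%N r_low (20 - i).

Definition rankPoly (c : nat) : {poly rat} :=
  \poly_(i < 21) (rcoef c i)%:R.

From mathcomp Require Import all_boot all_order all_algebra.
From mathcomp Require Import ring zify.
Import GRing.Theory Num.Theory.
Local Open Scope ring_scope.

(* Since R_{5,5} is palindromic of degree 20, R_{5,5}(-1) = r_10 + 2 (r_0 - r_1 + ... - r_9)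
   = r_10 - 2047506, so (1 + x) | R_{5,5} pins down r_10.  For that value,
   R_{5,5} = Q (1 + x)^4 with an explicit palindromic Q of degree 16 and
   Q(-1) = 13750 != 0, so -1 is a root of multiplicity exactly 4. *)

Section RootMultiplicity.
Variable F : fieldType.
Implicit Types (p q : {poly F}) (x : F).

Lemma XaddC1E : 'X + 1 = 'X - (-1)%:P :> {poly F}.
Proof. by rewrite polyCN opprK. Qed.

Lemma dvdp_Xadd1 p : ('X + 1) %| p = root p (-1).
Proof. by rewrite XaddC1E dvdp_XsubCl. Qed.

Lemma dvdp_exp_XsubC_mul q x k n : ~~ root q x ->
  (('X - x%:P) ^+ n %| q * ('X - x%:P) ^+ k) = (n <= k)%N.
Proof.
move=> qNx; have q_neq0 : q != 0 by apply: contraNneq qNx => ->; rewrite root0.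
rewrite -mup_geq ?mulf_neq0 ?expf_neq0 ?polyXsubC_eq0 //.
by rewrite mupMr // mup_XsubCX eqxx.
Qed.

End RootMultiplicity.

Definition natPoly {R : nzSemiRingType} (s : seq nat) : {poly R} :=
  Poly [seq n%:R | n <- s].

Lemma natPoly_nil (R : nzSemiRingType) : natPoly [::] = 0 :> {poly R}.
Proof. by []. Qed.

Lemma natPoly_cons (R : nzSemiRingType) n s :
  natPoly (n :: s) = natPoly s * 'X + n%:R%:P :> {poly R}.
Proof. exact: cons_poly_def. Qed.

Lemma rankPolyE c : rankPoly c = natPoly (r_low ++ c :: rev r_low).
Proof.
apply/polyP => i; rewrite coef_poly coef_Poly.
have size_r : size (r_low ++ c :: rev r_low) = 21 by [].
case: ltnP => [lt_i21 | le21_i]; last by rewrite nth_default // size_map size_r.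
rewrite (nth_map 0%N) ?size_r // /rcoef nth_cat /=; congr _%:R.
case: ltnP => // le10_i; case: eqP => [-> // | ne_i10].
have -> : (i - 10 = (i - 11).+1)%N by lia.
by rewrite /= nth_rev /=; [congr nth; lia | lia].
Qed.

(* Numerals above 5000 in nat are [Nat.of_num_uint] terms, which [simpl] would
   otherwise unfold into unary numbers. *)
Opaque Nat.of_num_uint.

Lemma horner_rankPoly c : (rankPoly c).[-1] = c%:R - 2047506%:R.
Proof. by rewrite rankPolyE horner_Poly /=; ring. Qed.

Definition rankQuot : {poly rat} :=
  natPoly [:: 1; 21; 210; 1330; 5985; 20348; 54243; 116070; 168410;
              116070; 54243; 20348; 5985; 1330; 210; 21; 1]%N.

Lemma horner_rankQuot : rankQuot.[-1] = 13750%:R.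
Proof. by rewrite horner_Poly /=; ring. Qed.

Lemma rankPoly_factor : rankPoly 2047506 = rankQuot * ('X + 1) ^+ 4.
Proof.
rewrite rankPolyE [_ ++ _]/= /rankQuot !natPoly_cons natPoly_nil.
ring.
Qed.

Theorem mainTheorem6 :
  (forall c : nat, (('X + 1 : {poly rat}) %| rankPoly c) = (c == 2047506%N))
  /\ (('X + 1 : {poly rat}) ^+ 4 %| rankPoly 2047506)
  /\ ~~ (('X + 1 : {poly rat}) ^+ 5 %| rankPoly 2047506).
Proof.
have dvdp_rankPoly n : (('X + 1) ^+ n %| rankPoly 2047506) = (n <= 4)%N.
  rewrite rankPoly_factor XaddC1E dvdp_exp_XsubC_mul //.
  by rewrite /root horner_rankQuot pnatr_eq0.
split; [|split].
- by move=> c; rewrite dvdp_Xadd1 /root horner_rankPoly subr_eq0 eqr_nat.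
- by rewrite dvdp_rankPoly.
- by rewrite dvdp_rankPoly.
Qed.
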